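(* Let $n\ge1$, $\bar M_0=\{u\in\mathbb{C}^{n+2}\mid u_1\cdots u_{n+2}=1,\ u_1+\cdots+u_{n+2}=0\}$, $\varpi:\bar M_0\to\mathbb{C}^\times$, $\varpi(u)=u_1$, and $p:\bar M_0\to\mathcal{P}^n$, $p(u)=[u_1:\cdots:u_{n+2}]$, where $\mathcal{P}^n=\{[z_1:\cdots:z_{n+2}]\in\mathbb{P}^{n+1}_{\mathbb{C}}\mid z_1+\cdots+z_{n+2}=0,\ z_i\ne0\}$. Let $U_1=\{[z_1:z_2:\cdots:z_{n+1}:1]\in\mathcal{P}^n\mid z_2,\ldots,z_{n+1}\in\mathbb{R}_{>0}\}$. Then $p^{-1}(U_1)$ consists of exactly $n+2$ connected components $U_\zeta$, indexed by the solutions $\zeta$ of $\zeta^{n+2}=(-1)^{n+1}(n+1)^{n+1}$, where $U_\zeta$ is characterized by the condition $\zeta\in\varpi(U_\zeta)$. *)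

(* C = R[i] (complex numbers over a
   realType R), with its standard norm topology; C^(n+2) is the row-vector
   type 'rV[C]_(n.+2) with the product topology. *)
From HB Require Import structures.
From mathcomp Require Import all_boot all_order all_algebra.
From mathcomp Require Import all_classical all_reals all_analysis.
From mathcomp Require Import complex.
Import Order.TTheory GRing.Theory Num.Theory.
Import numFieldNormedType.Exports.
Set Implicit Arguments. Unset Strict Implicit. Unset Printing Implicit Defensive.
Local Open Scope ring_scope.
Local Open Scope classical_set_scope.

Definition Cplx (R : realType) : numFieldType := R[i].

(* coordinates u_1, ..., u_{n+2} are u 0 i for i : 'I_(n.+2) (0-based) *)

Definition Mbar0 (R : realType) (n : nat) : set 'rV[Cplx R]_(n.+2) :=
  [set u | \prod_(i < n.+2) u 0 i = 1 /\ \sum_(i < n.+2) u 0 i = 0].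

Definition varpi (R : realType) (n : nat) (u : 'rV[Cplx R]_(n.+2)) : Cplx R :=
  u 0 ord0.

Definition Pn_rep (R : realType) (n : nat) (z : 'rV[Cplx R]_(n.+2)) : Prop :=
  \sum_(i < n.+2) z 0 i = 0 /\ forall i, z 0 i != 0.

Definition U1_rep (R : realType) (n : nat) (z : 'rV[Cplx R]_(n.+2)) : Prop :=
  Pn_rep z /\ z 0 ord_max = 1 /\
  forall i : 'I_(n.+2), (0 < i)%N -> (i < n.+1)%N ->
    exists r : R, 0 < r /\ z 0 i = (r%:C)%C.

(* p^{-1}(U_1) : points u of \bar M_0 whose class [u_1 : ... : u_{n+2}]
   lies in U_1, i.e. u = lambda * z for some lambda <> 0 and some
   representative z of a point of U_1 of the above form. *)
Definition preimU1 (R : realType) (n : nat) : set 'rV[Cplx R]_(n.+2) :=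
  [set u | Mbar0 u /\
    exists (lam : Cplx R) (z : 'rV[Cplx R]_(n.+2)),
      lam != 0 /\ u = lam *: z /\ U1_rep z].

Definition components (T : topologicalType) (A : set T) : set (set T) :=
  [set connected_component A x | x in A].

Definition zeta_roots (R : realType) (n : nat) : set (Cplx R) :=
  [set z | z ^+ n.+2 = (-1) ^+ n.+1 * (n.+1)%:R ^+ n.+1].

From HB Require Import structures.
From mathcomp Require Import all_boot all_order all_algebra.
From mathcomp Require Import all_classical all_reals all_analysis.
From mathcomp Require Import complex.
From mathcomp Require Import ring lra.
Import Order.TTheory GRing.Theory Num.Theory.
Import numFieldNormedType.Exports.
Set Implicit Arguments. Unset Strict Implicit. Unset Printing Implicit Defensive.
Local Open Scope ring_scope.
Local Open Scope classical_set_scope.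

(* A point of p^-1(U_1) is u = l (-(1 + \sum r), r_2, ..., r_(n+1), 1) with all r_i > 0, and
   u_1 ... u_(n+2) = 1 becomes l^(n+2) (1 + \sum r) \prod r = -1.  Hence l / |l| is one of the
   n+2 roots w of -1, and since l = u_(n+2) the sets where l lies on the ray R_(>0) w are
   relatively closed, so they separate p^-1(U_1).  Each of them is connected: |l| is determined
   by r, so it is a continuous image of the positive orthant, which is a union of paths
   r^s through (1, ..., 1).  On the piece of w, varpi u = -l (1 + \sum r) runs along the ray
   -R_(>0) w, which contains exactly one solution zeta = -c w, c^(n+2) = (n+1)^(n+1). *)

Section RootsOfMinusOne.
Variable R : realType.
Local Notation C := (Cplx R).

Definition expi (a : R) : C := (cos a +i* sin a)%C.

Lemma expiD a b : expi (a + b) = expi a * expi b.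
Proof.
rewrite /expi cosD sinD; apply/eqP; rewrite eq_complex /=.
by apply/andP; split; apply/eqP; ring.
Qed.

Lemma expiMn a k : expi a ^+ k = expi (a *+ k).
Proof.
elim: k => [|k IHk]; first by rewrite expr0 mulr0n /expi cos0 sin0.
by rewrite exprS IHk mulrS expiD.
Qed.

Lemma norm_expi a : `|expi a| = 1.
Proof. by rewrite normc_def /= cos2Dsin2 sqrtr1. Qed.

Lemma expi_neq1 a : 0 < a < pi *+ 2 -> expi a != 1.
Proof.
move=> /andP[a_gt0 a_lt2pi]; apply/negP; rewrite eq_complex /= => /andP[/eqP cos1 /eqP sin0].
have [a_ltpi|pi_lta|a_pi] := ltgtP a pi.
- by move: (@sin_gt0_pi R a); rewrite a_gt0 a_ltpi sin0 ltxx => /(_ isT).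
- have : 0 < sin (a - pi) by apply: sin_gt0_pi; rewrite subr_gt0 pi_lta ltrBlDr -mulr2n.
  by rewrite -[sin _]opprK -sinDpi subrK sin0 oppr0 ltxx.
- by move: cos1; rewrite a_pi cospi => /eqP; rewrite -subr_eq0; lra.
Qed.

Variable m : nat.
Hypothesis m_gt0 : (0 < m)%N.

Let m_neq0 : m%:R != 0 :> R.
Proof. by rewrite pnatr_eq0 -lt0n. Qed.

Definition unity_root : C := expi (pi *+ 2 / m%:R).

Lemma unity_rootX k : unity_root ^+ k = expi (pi *+ 2 * (k%:R / m%:R)).
Proof. by rewrite /unity_root expiMn -mulr_natr; congr expi; ring. Qed.

Lemma unity_root_prim : m.-primitive_root unity_root.
Proof.
have unity_root_m : unity_root ^+ m = 1.
  by rewrite unity_rootX divff // mulr1 /expi cos2pi sin2pi.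
have [k k_prim k_dvd] := prim_order_exists m_gt0 unity_root_m.
have k_gt0 := prim_order_gt0 k_prim.
suff k_eq : k = m by rewrite -k_eq.
have [k_lt|m_lt|//] := ltngtP k m; last by have := dvdn_leq m_gt0 k_dvd; rewrite leqNgt m_lt.
have pi_gt0 := pi_gt0 R.
have q_gt0 : 0 < k%:R / m%:R :> R by rewrite divr_gt0 ?ltr0n.
have q_lt1 : k%:R / m%:R < 1 :> R by rewrite ltr_pdivrMr ?mul1r ?ltr_nat ?ltr0n.
have : expi (pi *+ 2 * (k%:R / m%:R)) != 1.
  by apply: expi_neq1; rewrite mulr2n; apply/andP; split; nra.
by rewrite -unity_rootX (prim_expr_order k_prim) eqxx.
Qed.

Definition root_opp1 (k : nat) : C := expi (pi / m%:R) * unity_root ^+ k.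

Lemma root_opp1X k : root_opp1 k ^+ m = -1.
Proof.
rewrite exprMn -exprM mulnC exprM (prim_expr_order unity_root_prim) expr1n mulr1 expiMn.
have -> : pi / m%:R *+ m = pi :> R by rewrite -mulr_natr divfK.
rewrite /expi cospi sinpi.
by apply/eqP; rewrite eq_complex /= oppr0 !eqxx.
Qed.

Lemma norm_root_opp1 k : `|root_opp1 k| = 1.
Proof. by rewrite normrM normrX !norm_expi expr1n mulr1. Qed.

Let expi_neq0 a : expi a != 0.
Proof. by rewrite -normr_eq0 norm_expi oner_eq0. Qed.

Lemma root_opp1P w : w ^+ m = -1 -> exists2 k, (k < m)%N & w = root_opp1 k.
Proof.
have e_m : expi (pi / m%:R) ^+ m = -1.
  by have := root_opp1X 0; rewrite /root_opp1 expr0 mulr1.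
move=> wm; have : (w / expi (pi / m%:R)) ^+ m = 1.
  by rewrite exprMn exprVn wm e_m divrr // unitrN1.
move/(prim_rootP unity_root_prim) => [k wk]; exists k => //.
by rewrite /root_opp1 -wk mulrC divfK.
Qed.

Lemma root_opp1_inj i j : (i < m)%N -> (j < m)%N -> root_opp1 i = root_opp1 j -> i = j.
Proof.
move=> i_lt j_lt /(mulfI (expi_neq0 _)) /eqP.
by rewrite (eq_prim_root_expr unity_root_prim) !modn_small // => /eqP.
Qed.

End RootsOfMinusOne.

Lemma polar_unique (R : numDomainType) (s t a b : R) : 0 < s -> 0 < t ->
  `|a| = 1 -> `|b| = 1 -> s * a = t * b -> a = b.
Proof.
move=> s_gt0 t_gt0 a1 b1 e.
have st : s = t by have := congr1 Num.norm e; rewrite !normrM a1 b1 !mulr1 !gtr0_norm.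
by move: e; rewrite st; apply: mulfI; rewrite gt_eqF.
Qed.

Section Parametrisation.
Variables (R : realType) (n : nat).
Local Notation C := (Cplx R).
Local Notation m := n.+2.
Local Notation rc := (real_complex R).

Definition inner (i : 'I_m) := (i != ord0) && (i != ord_max).

Lemma innerE i : inner i = (0 < i < n.+1)%N.
Proof.
rewrite /inner -!(inj_eq val_inj) /= lt0n; congr (_ && _).
by rewrite ltn_neqAle -ltnS ltn_ord andbT.
Qed.

Lemma card_inner : #|inner| = n.
Proof.
have := cardD1 (ord0 : 'I_m) predT; rewrite card_ord !inE add1n => -[n1E].
have := cardD1 (ord_max : 'I_m) [predD1 predT & ord0].
rewrite -n1E !inE /= add1n => -[nE].
by rewrite [RHS]nE; apply: eq_card => i; rewrite !inE /inner andbT andbC.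
Qed.

Definition rep (r : 'I_m -> R) : 'rV[C]_m :=
  \row_i (if i == ord0 then - rc (1 + \sum_(j | inner j) r j)
          else if i == ord_max then 1 else rc (r i)).

Definition rep_prod (r : 'I_m -> R) : R :=
  (1 + \sum_(j | inner j) r j) * \prod_(j | inner j) r j.

Definition pos_inner (r : 'I_m -> R) := forall i, inner i -> 0 < r i.

Lemma rep_first r : rep r 0 ord0 = - rc (1 + \sum_(j | inner j) r j).
Proof. by rewrite mxE eqxx. Qed.

Lemma rep_last r : rep r 0 ord_max = 1.
Proof. by rewrite mxE eqxx. Qed.

Lemma rep_inner r i : inner i -> rep r 0 i = rc (r i).
Proof. by case/andP=> i0 imax; rewrite mxE (negbTE i0) (negbTE imax). Qed.

Lemma sum_rep r : \sum_i rep r 0 i = 0.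
Proof.
rewrite (bigD1 ord0) //= (bigD1 ord_max) //= rep_first rep_last.
rewrite (eq_bigr (rc \o r)) => [|i /rep_inner//].
by rewrite rmorphD rmorph1 rmorph_sum addNr.
Qed.

Lemma prod_rep r : \prod_i rep r 0 i = - rc (rep_prod r).
Proof.
rewrite (bigD1 ord0) //= (bigD1 ord_max) //= rep_first rep_last.
rewrite (eq_bigr (rc \o r)) => [|i /rep_inner//].
by rewrite /rep_prod rmorphM rmorph_prod mul1r mulNr.
Qed.

Lemma rep_eq_inner r r' : (forall i, inner i -> r i = r' i) -> rep r = rep r'.
Proof.
move=> rr'; apply/rowP => i; rewrite !mxE (eq_bigr _ rr').
by case: ifP => // i0; case: ifP => // imax; rewrite rr' // /inner i0 imax.
Qed.

Lemma rep_prod_eq_inner r r' : (forall i, inner i -> r i = r' i) -> rep_prod r = rep_prod r'.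
Proof. by move=> rr'; rewrite /rep_prod (eq_bigr _ rr') (eq_bigr _ rr'). Qed.

Lemma sum_inner_gt0 r : pos_inner r -> 0 < 1 + \sum_(j | inner j) r j.
Proof. by move=> r_gt0; rewrite ltr_pwDl // sumr_ge0 // => i /r_gt0/ltW. Qed.

Lemma rep_prod_gt0 r : pos_inner r -> 0 < rep_prod r.
Proof. by move=> r_gt0; rewrite mulr_gt0 ?sum_inner_gt0 ?prodr_gt0. Qed.

Lemma U1_rep_rep r : pos_inner r -> U1_rep (rep r).
Proof.
move=> r_gt0; split; last split; first split.
- exact: sum_rep.
- move=> i; case: (boolP (inner i)) => [ii|].
    by rewrite rep_inner // eq_complex /= gt_eqF ?r_gt0.
  rewrite negb_and !negbK => /orP[]/eqP->; last by rewrite rep_last oner_eq0.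
  by rewrite rep_first oppr_eq0 eq_complex /= gt_eqF ?sum_inner_gt0.
- exact: rep_last.
- move=> i i_gt0 i_lt; have ii : inner i by rewrite innerE i_gt0.
  by exists (r i); rewrite rep_inner ?r_gt0.
Qed.

Lemma U1_repP z : U1_rep z -> exists2 r, pos_inner r & z = rep r.
Proof.
move=> [[z_sum _] [z_last z_inner]].
pose r i := complex.Re (z 0 i).
have zr i : inner i -> z 0 i = rc (r i) /\ 0 < r i.
  rewrite /r innerE => /andP[i_gt0 i_lt]; have [x [x_gt0 ->]] := z_inner i i_gt0 i_lt.
  by split.
exists r => [i /zr[]//|]; apply/rowP => j; rewrite mxE.
case: ifP => [/eqP->|j0].
  move: z_sum; rewrite (bigD1 ord0) //= (bigD1 ord_max) //= z_last.
  rewrite (eq_bigr (rc \o r)) => [|i /zr[]//].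
  by move=> /eqP; rewrite addr_eq0 => /eqP->; rewrite rmorphD rmorph1 rmorph_sum.
case: ifP => [/eqP->//|jmax].
have jj : inner j by rewrite /inner j0 jmax.
by have [] := zr j jj.
Qed.

Lemma scale_rep_last l r : (l *: rep r) 0 ord_max = l.
Proof. by rewrite mxE rep_last mulr1. Qed.

Lemma Mbar0_scale_rep l r : Mbar0 (l *: rep r) <-> l ^+ m * rc (rep_prod r) = -1.
Proof.
rewrite /Mbar0 /=.
have -> : \prod_i (l *: rep r) 0 i = - (l ^+ m * rc (rep_prod r)).
  under eq_bigr do rewrite mxE.
  by rewrite big_split /= prodr_const card_ord prod_rep mulrN.
have -> : \sum_i (l *: rep r) 0 i = 0.
  by under eq_bigr do rewrite mxE; rewrite -mulr_sumr sum_rep mulr0.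
by split=> [[<-]|->]; rewrite opprK.
Qed.

Lemma scale_neq0 l r : l ^+ m * rc (rep_prod r) = -1 -> l != 0.
Proof.
by apply: contra_eq_neq => ->; rewrite expr0n mul0r eq_sym oppr_eq0 oner_eq0.
Qed.

Lemma preimU1P u : preimU1 u <->
  exists l r, [/\ u = l *: rep r, pos_inner r & l ^+ m * rc (rep_prod r) = -1].
Proof.
split=> [[Mu [l [z [_ [uE /U1_repP[r r_gt0 zE]]]]]]|[l [r [uE r_gt0 lr]]]].
  by exists l, r; split => //; [rewrite uE zE | apply/Mbar0_scale_rep; rewrite -zE -uE].
split; first by rewrite uE; apply/Mbar0_scale_rep.
by exists l, (rep r); split; [exact: scale_neq0 lr | split; last exact: U1_rep_rep].
Qed.

End Parametrisation.

Lemma continuous_real_complex (R : realType) : continuous (fun x : R => (x%:C)%C : Cplx R).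
Proof.
move=> x; apply/cvgrPdist_lt => e; rewrite ltcE /= => /andP[/eqP Im_e Re_e_gt0].
near=> y; rewrite -rmorphB normc_def /= expr0n /= addr0 sqrtr_sqr ltcE /= Im_e eqxx /=.
by near: y; apply: cvgr_dist_lt.
Unshelve. all: by end_near. Qed.

Lemma continuous_row (K : numFieldType) (T : topologicalType) m (F : T -> 'rV[K]_m) :
  (forall i, continuous (fun s => F s 0 i)) -> continuous F.
Proof.
move=> F_cont s A [Q Q_nbhs QA].
have : \forall t \near s, forall i j, Q i j (F t i j).
  apply: filter_forall => i; apply: filter_forall => j.
  by rewrite (ord1 i); apply: F_cont; rewrite -(ord1 i).
by apply: filterS => t Qt; apply: QA.
Qed.

Section Sectors.
Variables (R : realType) (n : nat).
Local Notation C := (Cplx R).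
Local Notation m := n.+2.
Local Notation rc := (real_complex R).
Local Notation root_opp1 := (@root_opp1 R m).
Local Notation preimU1 := (@preimU1 R n).
Local Notation pos_inner := (@pos_inner R n).

Definition ray (k : nat) : set 'rV[C]_m :=
  [set u | u 0 ord_max = `|u 0 ord_max| * root_opp1 k].

(* the component U_zeta of the paper, for zeta = zeta k below *)
Definition sector (k : nat) := preimU1 `&` ray k.

Lemma preimU1_last_neq0 u : preimU1 u -> u 0 ord_max != 0.
Proof.
by case/preimU1P=> l [r [-> _ lr]]; rewrite scale_rep_last; exact: scale_neq0 lr.
Qed.

Lemma sector_cover u : preimU1 u -> exists2 k, (k < m)%N & sector k u.
Proof.
move=> pu; have [l [r [uE r_gt0 lr]]] := (preimU1P u).1 pu.
have P_gt0 : 0 < rc (rep_prod r) by rewrite ltcR rep_prod_gt0.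
have l_neq0 := scale_neq0 lr.
have lm : l ^+ m = - (rc (rep_prod r))^-1.
  by apply: (mulIf (lt0r_neq0 P_gt0)); rewrite lr mulNr mulVf ?lt0r_neq0.
have : (l / `|l|) ^+ m = -1.
  rewrite exprMn exprVn -normrX lm normrN normfV gtr0_norm // mulNr divff //.
  by rewrite invr_eq0 lt0r_neq0.
case/(root_opp1P (ltn0Sn _)) => k k_lt lk; exists k => //; split => //.
by rewrite /ray /= uE scale_rep_last -lk mulrC divfK ?normr_eq0.
Qed.

Lemma sector_ray_eq j k u : (j < m)%N -> (k < m)%N -> sector k u -> ray j u -> j = k.
Proof.
move=> j_lt k_lt [pu uk] uj; have u_gt0 := normr_gt0 (u 0 ord_max).
rewrite preimU1_last_neq0 // in u_gt0.
have := polar_unique u_gt0 u_gt0 (norm_root_opp1 R m j) (norm_root_opp1 R m k).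
by move/(_ (etrans (esym uj) uk)); exact: root_opp1_inj.
Qed.

Lemma ray_closed k : closed (ray k).
Proof.
have -> : ray k = (fun u => u 0 ord_max - `|u 0 ord_max| * root_opp1 k) @^-1` [set 0].
  by apply/seteqP; split => u /= uk; apply/eqP; [rewrite subr_eq0 | rewrite -subr_eq0]; apply/eqP.
have closed0 : closed [set x : C | x = 0].
  exact: (accessible_closed_set1 (hausdorff_accessible (@norm_hausdorff _ _))).
apply: preimage_closed closed0 => u _.
apply: (cvgB (F := nbhs u)); first exact: coord_continuous.
apply: cvgM; last exact: cvg_cst.
by apply: cvg_norm; exact: coord_continuous.
Qed.

Lemma sector_separated k : (k < m)%N -> separated (sector k) (preimU1 `\` sector k).
Proof.
move=> k_lt.
pose others := \bigcup_(j in [set j | (j < m)%N /\ j != k]) ray j.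
have closure_ray : closure (sector k) `<=` ray k.
  by rewrite closureE; apply: smallest_sub; [exact: ray_closed | move=> u []].
have closure_others : closure (preimU1 `\` sector k) `<=` others.
  rewrite closureE; apply: smallest_sub.
    apply: closed_bigcup => [|j _]; last exact: ray_closed.
    by apply: sub_finite_set (finite_II m) => j [].
  move=> v [pv nkv]; have [j j_lt jv] := sector_cover pv.
  exists j; last by case: jv.
  by split => //; apply/eqP => jk; apply: nkv; rewrite -jk.
split; apply/seteqP; split => // v.
- by move=> [/closure_ray vk [pv]]; apply.
- move=> [kv /closure_others [j [j_lt jk] jv]].
  by move: jk; rewrite (sector_ray_eq j_lt k_lt kv jv) eqxx.
Qed.


Definition mroot_inv (p : R) : R := expR (- ln p / m%:R).

Lemma mroot_inv_gt0 p : 0 < mroot_inv p.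
Proof. exact: expR_gt0. Qed.

Lemma mroot_invX p : 0 < p -> mroot_inv p ^+ m * p = 1.
Proof.
move=> p_gt0; rewrite /mroot_inv -expRM_natr divfK ?pnatr_eq0 //.
by rewrite expRN lnK ?posrE // mulVf ?gt_eqF.
Qed.

Lemma continuous_mroot_inv (T : topologicalType) (f : T -> R) :
  continuous f -> (forall s, 0 < f s) -> continuous (fun s => mroot_inv (f s)).
Proof.
move=> f_cont f_gt0 s; rewrite /mroot_inv.
apply: continuous_comp; last exact: continuous_expR.
apply: (cvgM (F := nbhs s)); last exact: cvg_cst.
by apply: (cvgN (F := nbhs s)); apply: continuous_comp (f_cont s) (continuous_ln (f_gt0 s)).
Qed.

Definition sector_point (k : nat) (r : 'I_m -> R) : 'rV[C]_m :=
  (rc (mroot_inv (rep_prod r)) * root_opp1 k) *: rep r.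

Lemma sector_point_sector k r : pos_inner r -> sector k (sector_point k r).
Proof.
move=> r_gt0; have t_gt0 := mroot_inv_gt0 (rep_prod r).
split.
  apply/preimU1P; exists (rc (mroot_inv (rep_prod r)) * root_opp1 k), r; split => //.
  rewrite exprMn root_opp1X // mulrN1 mulNr -rmorphXn -rmorphM.
  by rewrite mroot_invX ?rep_prod_gt0 // rmorph1.
by rewrite /ray /= scale_rep_last normrM norm_root_opp1 mulr1 gtr0_norm // ltcR.
Qed.

Lemma sectorE k : sector k = sector_point k @` pos_inner.
Proof.
apply/seteqP; split => [u [/preimU1P[l [r [uE r_gt0 lr]]] uk]|_ [r r_gt0 <-]].
  exists r => //; rewrite /sector_point uE; congr (_ *: _).
  move: uk; rewrite /ray /= uE scale_rep_last => ->; congr (_ * _).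
  have P_gt0 : 0 < rc (rep_prod r) by rewrite ltcR rep_prod_gt0.
  have lP : `|l| ^+ m * rc (rep_prod r) = 1.
    by rewrite -normrX -(gtr0_norm P_gt0) -normrM lr normrN normr1.
  have tP : rc (mroot_inv (rep_prod r)) ^+ m * rc (rep_prod r) = 1.
    by rewrite -rmorphXn -rmorphM mroot_invX ?rep_prod_gt0 // rmorph1.
  apply/eqP; rewrite -(eqrXn2 (ltn0Sn n.+1)) ?normr_ge0 ?ler0c ?ltW ?mroot_inv_gt0 //.
  by apply/eqP/(mulIf (lt0r_neq0 P_gt0)); rewrite lP tP.
exact: sector_point_sector.
Qed.

Lemma sector_point_eq_inner k r r' : (forall i, inner i -> r i = r' i) ->
  sector_point k r = sector_point k r'.
Proof. by move=> rr'; rewrite /sector_point (rep_eq_inner rr') (rep_prod_eq_inner rr'). Qed.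

Section ContinuousFamily.
Variable f : R -> 'I_m -> R.
Hypothesis f_cont : forall i, continuous (f^~ i).

Let continuous_sum : continuous (fun s => 1 + \sum_(j | inner j) f s j).
Proof.
move=> s; apply: (cvgD (F := nbhs s)); first exact: cvg_cst.
by apply: (continuous_big add_continuous) => j _; exact: f_cont.
Qed.

Lemma continuous_rep : continuous (fun s => rep (f s)).
Proof.
apply: continuous_row => i s; rewrite /continuous_at.
under eq_cvg do rewrite mxE; rewrite mxE.
case: ifP => _; last case: ifP => _.
- apply: (cvgN (F := nbhs s)); apply: continuous_comp; first exact: continuous_sum.
  exact: continuous_real_complex.
- exact: cvg_cst.
- by apply: continuous_comp; [exact: f_cont | exact: continuous_real_complex].
Qed.

Lemma continuous_sector_point k : (forall s, pos_inner (f s)) ->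
  continuous (fun s => sector_point k (f s)).
Proof.
move=> f_gt0.
have P_cont : continuous (fun s => rep_prod (f s)).
  move=> s; apply: (cvgM (F := nbhs s)); first exact: continuous_sum.
  by apply: (continuous_big mul_continuous) => j _; exact: f_cont.
have T_cont := continuous_mroot_inv P_cont (fun s => rep_prod_gt0 (f_gt0 s)).
move=> s; apply: (cvgZ (F := nbhs s)); last exact: continuous_rep.
apply: (cvgM (F := nbhs s)); last exact: cvg_cst.
apply: (continuous_comp (f := fun s => mroot_inv (rep_prod (f s)))); first exact: T_cont.
exact: continuous_real_complex.
Qed.

End ContinuousFamily.

Definition pow_path (r : 'I_m -> R) (s : R) : 'I_m -> R := fun i => expR (s * ln (r i)).

Lemma sector_connected k : connected (sector k).
Proof.
have -> : sector k = \bigcup_(r in pos_inner) [set sector_point k (pow_path r s) | s in setT].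
  rewrite sectorE; apply/seteqP; split => [_ [r r_gt0 <-]|_ [r r_gt0 [s _ <-]]].
    exists r; first exact: r_gt0.
    exists 1; first by [].
    apply: sector_point_eq_inner => i /r_gt0 r_i_gt0.
    by rewrite /pow_path mul1r lnK.
  by exists (pow_path r s) => // i _; exact: expR_gt0.
apply: bigcup_connected.
  exists (sector_point k (fun=> 1)) => r _; exists 0 => [//|].
  by congr sector_point; apply/funext => i; rewrite /pow_path mul0r expR0.
move=> r _; apply: connected_continuous_connected.
  by apply/connected_intervalP => x y _ _ z _.
apply: continuous_subspaceT; apply: continuous_sector_point => [i s|s i _]; last exact: expR_gt0.
have lin_cont : continuous (fun s : R => s * ln (r i)).
  by move=> s'; apply: (cvgM (F := nbhs s')); [exact: cvg_id | exact: cvg_cst].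
by apply: (continuous_comp (lin_cont s)); exact: continuous_expR.
Qed.

Lemma connected_component_sector k u : (k < m)%N -> sector k u ->
  connected_component preimU1 u = sector k.
Proof.
move=> k_lt ku; apply/seteqP; split; last first.
  apply: connected_component_max; [exact: ku | by move=> v [] | exact: sector_connected].
have := @component_connected _ preimU1 u.
case/(connected_subset (sector_separated k_lt)) => // [v uv|].
  have [kv|nkv] := pselect (sector k v); [by left | right].
  by split => //; exact: connected_component_sub uv.
by move=> /(_ u (connected_component_refl ku.1)) [_].
Qed.

Lemma components_preimU1 : components preimU1 = [set sector k | k in `I_m].
Proof.
apply/seteqP; split => [_ [u pu <-]|_ [k k_lt <-]].
  have [k k_lt ku] := sector_cover pu.
  by exists k => //; rewrite (connected_component_sector k_lt ku).
have ku := sector_point_sector k (fun _ _ => @ltr01 R).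
by exists (sector_point k (fun=> 1)); [case: ku | exact: connected_component_sector].
Qed.

Definition zeta_scale : R := mroot_inv n.+1%:R * n.+1%:R.

Definition zeta (k : nat) : C := - (rc zeta_scale * root_opp1 k).

Lemma zeta_scale_gt0 : 0 < zeta_scale.
Proof. by rewrite mulr_gt0 ?mroot_inv_gt0 ?ltr0n. Qed.

Lemma sum_inner_one : 1 + \sum_(j : 'I_m | inner j) 1 = n.+1%:R :> R.
Proof.
by rewrite (eq_bigl (fun j => j \in @inner n)) // sumr_const card_inner -mulrS.
Qed.

Lemma zeta_scaleX : rc zeta_scale ^+ m = n.+1%:R ^+ n.+1.
Proof.
have : zeta_scale ^+ m = n.+1%:R ^+ n.+1.
  by rewrite /zeta_scale exprMn [_ ^+ m]exprS mulrA mroot_invX ?ltr0Sn // mul1r.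
by move=> /(congr1 rc); rewrite !rmorphXn rmorph_nat.
Qed.

Lemma zeta_rootsP z : zeta_roots n z <-> exists2 k, (k < m)%N & z = zeta k.
Proof.
have sign2 : (-1) ^+ n.+1 * (-1) ^+ n.+1 = 1 :> C by rewrite -exprMn mulrNN mulr1 expr1n.
have c_neq0 : rc zeta_scale != 0 by rewrite eq_complex /= gt_eqF ?zeta_scale_gt0.
split=> [zm|[k k_lt ->]]; last first.
  rewrite /zeta_roots /zeta /= [LHS]exprNn exprMn root_opp1X // zeta_scaleX [(-1) ^+ m]exprS.
  ring.
have : (- (z / rc zeta_scale)) ^+ m = -1.
  rewrite exprNn exprMn exprVn zeta_scaleX zm mulfK ?expf_neq0 ?pnatr_eq0 //.
  by rewrite [(-1) ^+ m]exprS -mulrA sign2 mulr1.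
case/(root_opp1P (ltn0Sn _)) => k k_lt zk; exists k => //.
by rewrite /zeta -zk mulrN opprK mulrC divfK.
Qed.

Lemma varpi_sector k u : sector k u -> exists2 s : C, 0 < s & varpi u = - (s * root_opp1 k).
Proof.
rewrite sectorE => -[r r_gt0 <-].
exists (rc (mroot_inv (rep_prod r) * (1 + \sum_(j | inner j) r j))).
  by rewrite ltcR mulr_gt0 ?mroot_inv_gt0 ?sum_inner_gt0.
by rewrite /varpi mxE rep_first rmorphM mulrN; congr (- _); ring.
Qed.

Lemma varpi_zeta k : (varpi (n:=n) @` sector k) (zeta k).
Proof.
exists (sector_point k (fun=> 1)); first exact: sector_point_sector.
rewrite /varpi mxE rep_first /zeta /zeta_scale.
by rewrite /rep_prod big1_eq mulr1 sum_inner_one rmorphM mulrN; congr (- _); ring.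
Qed.

Lemma varpi_sector_zeta j k : (j < m)%N -> (k < m)%N ->
  (varpi (n:=n) @` sector j) (zeta k) -> j = k.
Proof.
move=> j_lt k_lt [u ju uk]; have [s s_gt0 us] := varpi_sector ju.
move: us; rewrite uk /zeta => /oppr_inj e.
have c_gt0 : 0 < rc zeta_scale by rewrite ltcR zeta_scale_gt0.
have := polar_unique s_gt0 c_gt0 (norm_root_opp1 R m j) (norm_root_opp1 R m k) (esym e).
exact: root_opp1_inj.
Qed.

End Sectors.

Unset Implicit Arguments.
Local Open Scope card_scope.

Theorem mainTheorem12 (R : realType) (n : nat) (hn : (1 <= n)%N) :
  (components (@preimU1 R n) #= `I_(n.+2)) /\
  (forall zeta, @zeta_roots R n zeta ->
     exists! U, components (@preimU1 R n) U /\ (varpi (n:=n) @` U) zeta) /\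
  (forall U, components (@preimU1 R n) U ->
     exists! zeta, @zeta_roots R n zeta /\ (varpi (n:=n) @` U) zeta).
Proof.
have compE := components_preimU1 R n.
split; last split.
- rewrite compE; apply: inj_card_eq => j k; rewrite !in_setE /= => j_lt k_lt jk.
  by apply: (varpi_sector_zeta (R := R) j_lt k_lt); rewrite jk; exact: varpi_zeta.
- move=> _ /zeta_rootsP[k k_lt ->]; exists (@sector R n k); split.
    by split; [rewrite compE; exists k | exact: varpi_zeta].
  move=> U [+ kU]; rewrite compE => -[j j_lt jU]; rewrite -jU in kU *.
  by rewrite (varpi_sector_zeta j_lt k_lt kU).
- move=> U; rewrite compE => -[k k_lt <-]; exists (@zeta R n k); split.
    by split; [apply/zeta_rootsP; exists k | exact: varpi_zeta].
  by move=> _ [/zeta_rootsP[j j_lt ->] /(varpi_sector_zeta k_lt j_lt)->].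
Qed.
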